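(* In the setting described in the context, let $x\in\operatorname{supp}(\mu)$ be an isolated point of $\operatorname{supp}(\mu)$, and suppose that $K_n(x,x)\neq0$ for all large $n$ and that $\lim_{n\to\infty}G_n[f](x)=f(x)$ for every bounded continuous function $f$ on $\mathbb{R}$. Then \[ \lim_{n\to\infty}K_n(x,x)=\frac{1}{\mu(\{x\})}. \]
   Context: Let $r\ge1$ and let $\mu_1,\dots,\mu_r$ be positive Borel measures on $\mathbb{R}$ with all moments finite, forming a perfect system: for every $\vec n\in\mathbb{N}_0^r$ there is a monic polynomial $P_{\vec n}$ of degree $|\vec n|=n_1+\dots+n_r$ with $\int x^kP_{\vec n}\,d\mu_j=0$ for $0\le k\le n_j-1$, $1\le j\le r$. Type I polynomials $A_{\vec n}=(A_{\vec n,1},\dots,A_{\vec n,r})$: $\deg A_{\vec n,j}\le n_j-1$, $\sum_j\int x^kA_{\vec n,j}\,d\mu_j=0$ for $0\le k\le|\vec n|-2$, and $=1$ for $k=|\vec n|-1$. Let $\mu$ be a positive measure with $\mu_j\ll\mu$, $w_j=d\mu_j/d\mu$, $Q_{\vec n}=\sum_jA_{\vec n,j}w_j$. Fix a path $(\vec n_\ell)_{\ell\ge0}$ with $|\vec n_\ell|=\ell$, $\vec n_{\ell+1}=\vec n_\ell+\vec e_{i_\ell}$ ($\vec e_j$ the $j$-th unit vector), and set $p_\ell=P_{\vec n_\ell}$, $q_\ell=Q_{\vec n_{\ell+1}}$, so that $\int p_\ell q_{\ell'}\,d\mu=\delta_{\ell,\ell'}$. The Christoffel--Darboux kernel is $K_n(x,y)=\sum_{j=0}^{n-1}p_j(x)q_j(y)$.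 For bounded measurable $f$, $x\in\operatorname{supp}(\mu)$ and $K_n(x,x)\ne0$, define $G_n[f](x)=\frac{1}{K_n(x,x)}\int_{\mathbb{R}}K_n(x,y)K_n(y,x)f(y)\,d\mu(y)$. *)

From HB Require Import structures.
From mathcomp Require Import all_boot all_order all_algebra.
From mathcomp Require Import all_classical all_reals all_analysis.
Set Implicit Arguments. Unset Strict Implicit. Unset Printing Implicit Defensive.
Import Order.TTheory GRing.Theory Num.Theory.
Import numFieldNormedType.Exports.
Local Open Scope classical_set_scope.
Local Open Scope ring_scope.

(* Multi-indices n in N_0^r are functions 'I_r -> nat. *)
Definition mnorm (r : nat) (n : 'I_r -> nat) : nat := (\sum_(j < r) n j)%N.

Definition mvunit (r : nat) (i : 'I_r) : 'I_r -> nat := fun j => (j == i : nat).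

Definition mvadd (r : nat) (n m : 'I_r -> nat) : 'I_r -> nat := fun j => (n j + m j)%N.

Definition msupp (R : realType) (mu : {measure set R -> \bar R}) : set R :=
  [set x | forall e : R, 0 < e -> (0 < mu (ball x e))%E].

Definition isolated_in (R : realType) (S : set R) (x : R) : Prop :=
  S x /\ exists2 e : R, 0 < e & S `&` ball x e = [set x].

Definition Qfun (R : realType) (r : nat) (A : ('I_r -> nat) -> 'I_r -> {poly R})
  (w : 'I_r -> R -> R) (n : 'I_r -> nat) (y : R) : R :=
  \sum_(j < r) (A n j).[y] * w j y.

Definition CDkernel (R : realType) (r : nat) (P : ('I_r -> nat) -> {poly R})
  (A : ('I_r -> nat) -> 'I_r -> {poly R}) (w : 'I_r -> R -> R)
  (nv : nat -> 'I_r -> nat) (n : nat) (x y : R) : R :=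
  \sum_(l < n) (P (nv l)).[x] * Qfun A w (nv l.+1) y.

Definition Gop (R : realType) (mu : {measure set R -> \bar R})
  (K : nat -> R -> R -> R) (n : nat) (f : R -> R) (x : R) : R :=
  (K n x x)^-1 * fine (\int[mu]_y ((K n x y * K n y x * f y)%:E)).

(* Around an isolated point x of supp(mu) some punctured ball B(x,e) \ {x} lies
   outside the support, which is mu-null (it is covered by countably many null
   balls with rational centres).  Testing G_n with a continuous tent f supported
   in B(x,e) with f(x) = 1, the integral collapses onto the atom at x:
   G_n[f](x) = K_n(x,x) mu({x}).  Since this tends to 1, mu({x}) is neither 0
   nor infinite (where [fine] would give 0), and K_n(x,x) -> 1/mu({x}). *)

From HB Require Import structures.
From mathcomp Require Import all_boot all_order all_algebra.
From mathcomp Require Import all_classical all_reals all_analysis.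
From mathcomp Require Import measurable_realfun.
Import Order.TTheory GRing.Theory Num.Theory.
Import numFieldNormedType.Exports.
Local Open Scope classical_set_scope.
Local Open Scope ring_scope.

Lemma fine_EFinMl {R : realType} (a : R) (m : \bar R) :
  fine (a%:E * m)%E = a * fine m.
Proof.
case: m => [m| |] //=; rewrite mulr0.
all: have [a0|a0|->] := ltgtP a 0; last by rewrite mul0e.
- by rewrite lt0_muley ?lte_fin.
- by rewrite gt0_muley ?lte_fin.
- by rewrite lt0_muleNy ?lte_fin.
- by rewrite gt0_muleNy ?lte_fin.
Qed.

Lemma rat_ball_within {R : realType} (y d : R) : 0 < d ->
  exists (q : rat) (m : nat),
    ball (ratr q : R) m.+1%:R^-1 y /\ ball (ratr q : R) m.+1%:R^-1 `<=` ball y d.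
Proof.
move=> d0; have [m] : exists m, 0 + m.+1%:R^-1 < d / 2.
  by apply: ltr_add_invr; rewrite divr_gt0.
rewrite add0r => md; set s := m.+1%:R^-1 : R.
have s0 : 0 < s by rewrite invr_gt0 ltr0n.
have [z [yz [q _ zq]]] := dense_rat (ex_intro _ y (ballxx y s0)) (@ball_open _ _ y s).
subst z; exists q, m; split; first exact: ball_sym.
move=> z qz; apply: (@ball_split _ _ (ratr q : R)); last exact: le_ball (ltW md) _ qz.
exact: le_ball (ltW md) _ yz.
Qed.

Section support.
Variables (R : realType) (mu : {measure set R -> \bar R}).

Lemma notin_msupp_null_ball y : ~ msupp mu y ->
  exists2 d : R, 0 < d & mu (ball y d) = 0%E.
Proof.
move=> /existsNP[d /not_implyP[d0]]; rewrite lt0e measure_ge0 andbT => /negP.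
by rewrite negbK => /eqP; exists d.
Qed.

Lemma msupp_compl_negligible : mu.-negligible (~` msupp mu).
Proof.
(* The null balls with rational centre and radius 1/(m+1), enumerated by [pickle]. *)
pose null_rat_ball k := if (unpickle k : option (rat * nat)) is Some (q, m) then
  if mu (ball (ratr q : R) m.+1%:R^-1) == 0%E then ball (ratr q : R) m.+1%:R^-1
  else set0 else set0.
apply: (@negligibleS _ _ _ _ (\bigcup_k null_rat_ball k)); last first.
  apply: negligible_bigcup => k; rewrite /null_rat_ball.
  case: (unpickle k) => [[q m]|]; last exact: negligible_set0.
  case: ifPn => [/eqP B0|_]; last exact: negligible_set0.
  by exists (ball (ratr q : R) m.+1%:R^-1); split => //; exact: measurable_ball.
move=> y /notin_msupp_null_ball[d d0 yd0].
have [q [m [qy qyd]]] := @rat_ball_within R y d d0.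
exists (pickle (q, m)); first by [].
rewrite /null_rat_ball pickleK.
suff -> : mu (ball (ratr q : R) m.+1%:R^-1) = 0%E by rewrite eqxx.
apply/eqP; rewrite -measure_le0 -yd0; apply: le_measure => //; rewrite inE;
  exact: measurable_ball.
Qed.

Lemma isolated_punctured_ball_negligible x : isolated_in (msupp mu) x ->
  exists2 e : R, 0 < e & mu.-negligible (ball x e `\ x).
Proof.
move=> [_ [e e0 He]]; exists e => //.
apply: negligibleS msupp_compl_negligible => y [bxy yx] Sy; apply: yx.
by have : (msupp mu `&` ball x e) y by []; rewrite He.
Qed.

End support.

Lemma integral_concentrated {R : realType} {mu : {measure set R -> \bar R}}
    {x e : R} (g : R -> R) :
  measurable_fun setT g -> mu.-negligible (ball x e `\ x) ->
  (forall y, ~ ball x e y -> g y = 0) ->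
  (\int[mu]_y (g y)%:E = (g x)%:E * mu [set x])%E.
Proof.
move=> mg Nx g0; rewrite -integral_cst; last exact: measurable_set1.
rewrite integral_mkcond; apply: ae_eq_integral => //.
- exact/measurable_EFinP.
- by apply/(measurable_restrictT _ (measurable_set1 x)); exact: measurable_cst.
apply: negligibleS Nx => y /= gy; have [yx|yx] := eqVneq y x.
  by exfalso; apply: gy => _; rewrite yx patchE mem_set.
split; last exact/eqP.
apply: contrapT => yb; apply: gy => _.
by rewrite g0 // patchE memNset //; exact/eqP.
Qed.

Lemma tent_function {R : realType} (x e : R) : 0 < e ->
  exists f : R -> R, [/\ continuous f, exists M : R, forall y, `|f y| <= M,
    f x = 1 & forall y, ~ ball x e y -> f y = 0].
Proof.
move=> e0; exists (fun y => Num.max 0 (1 - `|y - x| / e)); split.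
- move=> y; apply: (@continuous_max _ _ (cst 0) (fun y => 1 - `|y - x| / e)).
    exact: cst_continuous.
  apply: cvgB; first exact: cvg_cst.
  apply: cvgM; last exact: cvg_cst.
  by apply: cvg_norm; apply: cvgB; [exact: cvg_id|exact: cvg_cst].
- exists 1 => y; rewrite ger0_norm ?le_max ?lexx //.
  by rewrite ge_max ler01 /= gerBl divr_ge0 // ltW.
- by rewrite subrr normr0 mul0r subr0 max_r // ler01.
- move=> y; rewrite -ball_normE /= distrC => /negP; rewrite -leNgt => exy.
  by apply/max_idPl; rewrite subr_le0 ler_pdivlMr // mul1r.
Qed.

Lemma cvg_mulr_one_inv {T : Type} {F : set_system T} {FF : ProperFilter F}
    {R : realType} (c : R) (a : T -> R) :
  (fun t => a t * c) @ F --> (1 : R) -> a @ F --> c^-1.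
Proof.
move=> ac1; have c0 : c != 0.
  apply/eqP => c0; apply/(negP (oner_neq0 R))/eqP.
  apply: (cvg_unique (@Rhausdorff R) ac1).
  suff -> : (fun t => a t * c) = cst 0 by exact: cvg_cst.
  by apply/funext => t; rewrite c0 mulr0.
have -> : a = (fun t => a t * c * c^-1) by apply/funext => t; rewrite mulfK.
by rewrite -[X in _ --> X]mul1r; exact: cvgM ac1 (cvg_cst _).
Qed.

Section kernel_measurability.
Variables (R : realType) (r : nat) (P : ('I_r -> nat) -> {poly R}).
Variables (A : ('I_r -> nat) -> 'I_r -> {poly R}) (w : 'I_r -> R -> R).
Variable nv : nat -> 'I_r -> nat.

Lemma measurable_horner (p : {poly R}) : measurable_fun setT (horner p).
Proof. by apply: continuous_measurable_fun; exact: continuous_horner. Qed.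

Lemma measurable_CDkernel_l n x :
  measurable_fun setT (fun y => CDkernel P A w nv n y x).
Proof.
apply: (measurable_sum _
  (h := fun (l : 'I_n) y => (P (nv l)).[y] * Qfun A w (nv l.+1) x)) => l.
by apply: measurable_funM => //; exact: measurable_horner.
Qed.

Hypothesis mw : forall j, measurable_fun setT (w j).

Lemma measurable_Qfun n : measurable_fun setT (Qfun A w n).
Proof.
apply: (measurable_sum _ (h := fun j y => (A n j).[y] * w j y)) => j.
exact: measurable_funM (measurable_horner _) (mw j).
Qed.

Lemma measurable_CDkernel_r n x :
  measurable_fun setT (fun y => CDkernel P A w nv n x y).
Proof.
apply: (measurable_sum _
  (h := fun (l : 'I_n) y => (P (nv l)).[x] * Qfun A w (nv l.+1) y)) => l.
by apply: measurable_funM => //; exact: measurable_Qfun.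
Qed.

End kernel_measurability.

Theorem proposition6 (R : realType) (r : nat) (hr : (0 < r)%N)
  (mu_ : 'I_r -> {measure set R -> \bar R})
  (mu : {measure set R -> \bar R})
  (w : 'I_r -> R -> R)
  (P : ('I_r -> nat) -> {poly R})
  (A : ('I_r -> nat) -> 'I_r -> {poly R})
  (idx : nat -> 'I_r) (nv : nat -> 'I_r -> nat) (x : R) :
  (* all moments of the mu_j are finite *)
  (forall (j : 'I_r) (k : nat), (mu_ j).-integrable setT (fun y => (y ^+ k)%:E)) ->
  (* perfect system: P n is monic of degree |n| and of type II *)
  (forall n : 'I_r -> nat, P n \is monic) ->
  (forall n : 'I_r -> nat, size (P n) = (mnorm n).+1) ->
  (forall (n : 'I_r -> nat) (j : 'I_r) (k : nat), (k < n j)%N ->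
     (\int[mu_ j]_y ((y ^+ k * (P n).[y])%:E) = 0)%E) ->
  (* type I polynomials (for |n| >= 1) *)
  (forall (n : 'I_r -> nat) (j : 'I_r), (0 < mnorm n)%N -> (size (A n j) <= n j)%N) ->
  (forall (n : 'I_r -> nat) (k : nat), (0 < mnorm n)%N -> (k < (mnorm n).-1)%N ->
     (\sum_(j < r) \int[mu_ j]_y ((y ^+ k * (A n j).[y])%:E) = 0)%E) ->
  (forall (n : 'I_r -> nat), (0 < mnorm n)%N ->
     (\sum_(j < r) \int[mu_ j]_y ((y ^+ (mnorm n).-1 * (A n j).[y])%:E) = 1)%E) ->
  (* mu_j << mu with density w_j = d mu_j / d mu *)
  (forall j : 'I_r, measurable_fun setT (w j)) ->
  (forall (j : 'I_r) (y : R), 0 <= w j y) ->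
  (forall (j : 'I_r) (B : set R), measurable B ->
     (mu_ j B = \int[mu]_(y in B) (w j y)%:E)%E) ->
  (* the path (n_l) *)
  nv 0%N = (fun _ => 0%N) ->
  (forall l : nat, nv l.+1 = mvadd (nv l) (mvunit (idx l))) ->
  (* hypotheses on x *)
  isolated_in (msupp mu) x ->
  (\forall n \near \oo, CDkernel P A w nv n x x != 0) ->
  (forall f : R -> R, continuous f -> (exists M : R, forall y, `|f y| <= M) ->
     (fun n => Gop mu (CDkernel P A w nv) n f x) @ \oo --> f x) ->
  (fun n => CDkernel P A w nv n x x) @ \oo --> (fine (mu [set x]))^-1.
Proof.
move=> _ _ _ _ _ _ _ mw _ _ _ _ /isolated_punctured_ball_negligible[e e0 Nx] Knz HG.
have [f [fc fb fx f0]] := tent_function x e e0.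
set K := CDkernel P A w nv in Knz HG *.
apply: (cvg_mulr_one_inv (fine (mu [set x]))).
have := HG f fc fb; rewrite fx; apply: cvg_trans; apply: near_eq_cvg; near=> n.
have Kn : K n x x != 0 by near: n.
rewrite /Gop (integral_concentrated _ _ Nx).
- by rewrite fx mulr1 fine_EFinMl mulrA mulKf.
- apply: measurable_funM; last exact: continuous_measurable_fun.
  by apply: measurable_funM; [exact: measurable_CDkernel_r|exact: measurable_CDkernel_l].
- by move=> y /f0 ->; rewrite mulr0.
Unshelve. all: by end_near.
Qed.
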